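(* Let $J$ be a cone with joins and $A,\tilde A\subset J\times J$ be such that $v\le w$ for every $(v,w)\in A$, and $v+\tilde v\le w+\tilde w$ for every $(v,w)\in A$ and $(\tilde v,\tilde w)\in\tilde A$. Then $x:=\inf_{(v,w)\in A}(w-v)$ satisfies $v+x\le w$ and $\tilde v\le\tilde w+x$ for all $(v,w)\in A$, $(\tilde v,\tilde w)\in\tilde A$.
   Context: A prewedge is a set $W$ with a commutative associative addition with neutral element $0$ and a multiplication $[0,\infty)\times W\to W$ such that $\lambda(\eta v)=(\lambda\eta)v$, $0v=0$, $1v=v$, $(\lambda+\eta)v=\lambda v+\eta v$, $\lambda(v+w)=\lambda v+\lambda w$; it carries the preorder $v\le w$ iff $v+z=w$ for some $z$. A wedge is a prewedge in which $\le$ is antisymmetric and $v=\sup_{\eta<1}\eta v$ for every $v$. A cone is a wedge in which every directed subset has a supremum. A cone with joins is a cone $J$ in which every subset $A$ has an infimum and $\inf(v+A)=v+\inf A$ for all $v\in J$, $A\subset J$. For $v\le w$ in a cone with joins, $w-v:=\max\{z\in J: v+z=w\}$ (this maximum exists). The infimum of the empty family is the maximum $\infty$ of $J$. *)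

(* scalars are Stdlib reals, restricted to [0, oo) in the axioms. *)
From Stdlib Require Import Reals ClassicalEpsilon.
Open Scope R_scope.

Record PW := {
  carrier :> Type;
  pw_add : carrier -> carrier -> carrier;
  pw_zero : carrier;
  pw_smul : R -> carrier -> carrier }.

Section Cones.
Variable W : PW.
Local Notation "a '+w' b" := (pw_add W a b) (at level 50, left associativity).
Local Notation "l '*w' v" := (pw_smul W l v) (at level 40).

Definition is_prewedge : Prop :=
  (forall v w : W, v +w w = w +w v) /\
  (forall u v w : W, u +w (v +w w) = (u +w v) +w w) /\
  (forall v : W, v +w pw_zero W = v) /\
  (forall (l e : R) (v : W), 0 <= l -> 0 <= e -> l *w (e *w v) = (l * e) *w v) /\
  (forall v : W, 0 *w v = pw_zero W) /\
  (forall v : W, 1 *w v = v) /\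
  (forall (l e : R) (v : W), 0 <= l -> 0 <= e -> (l + e) *w v = l *w v +w e *w v) /\
  (forall (l : R) (v w : W), 0 <= l -> l *w (v +w w) = l *w v +w l *w w).

Definition pw_le (v w : W) : Prop := exists z : W, v +w z = w.

Definition is_upper (S : W -> Prop) (x : W) := forall s, S s -> pw_le s x.
Definition is_lower (S : W -> Prop) (x : W) := forall s, S s -> pw_le x s.
Definition is_sup (S : W -> Prop) (x : W) :=
  is_upper S x /\ forall y, is_upper S y -> pw_le x y.
Definition is_inf (S : W -> Prop) (x : W) :=
  is_lower S x /\ forall y, is_lower S y -> pw_le y x.
Definition is_max (S : W -> Prop) (x : W) := S x /\ is_upper S x.

Definition is_wedge : Prop :=
  is_prewedge /\
  (forall v w : W, pw_le v w -> pw_le w v -> v = w) /\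
  (forall v : W, is_sup (fun u => exists e, 0 <= e < 1 /\ u = e *w v) v).

Definition directed (D : W -> Prop) : Prop :=
  (exists d, D d) /\
  forall a b, D a -> D b -> exists c, D c /\ pw_le a c /\ pw_le b c.

Definition is_cone : Prop :=
  is_wedge /\ forall D, directed D -> exists x, is_sup D x.

Definition translate (v : W) (S : W -> Prop) : W -> Prop :=
  fun u => exists a, S a /\ u = v +w a.

Definition is_cone_with_joins : Prop :=
  is_cone /\
  (forall S : W -> Prop, exists x, is_inf S x) /\
  (forall (v : W) (S : W -> Prop) (x : W), is_inf S x -> is_inf (translate v S) (v +w x)).

(* The infimum of S (unique in a wedge, by antisymmetry). *)
Definition inf (S : W -> Prop) : W :=
  epsilon (inhabits (pw_zero W)) (is_inf S).

Definition pw_sub (w v : W) : W :=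
  epsilon (inhabits (pw_zero W)) (is_max (fun z => v +w z = w)).

End Cones.

(** For (v, w) in A put p := w - v, so that v + p = w and the first inequality
    is immediate.  For (ṽ, w̃) in Ã the hypothesis reads v + ṽ <= v + (w̃ + p).
    Adding it to itself n times and scaling by 1/n gives ṽ <= w̃ + p + v/n for
    every n, hence ṽ <= w̃ + p + h with h := inf_n v/n.  Since v = sup_{η<1} ηv,
    one has v + h = v, so v + (p + h) = w and the maximality of w - v yields
    p + h <= p.  Thus ṽ is a lower bound of w̃ + {w - v | (v, w) in A}, whose
    infimum is w̃ + x by the joins axiom. *)

From Stdlib Require Import Reals Lra ClassicalEpsilon.
Open Scope R_scope.
Set Implicit Arguments.
Unset Strict Implicit.

Local Notation "a '+w' b" := (pw_add _ a b) (at level 50, left associativity).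
Local Notation "l '*w' v" := (pw_smul _ l v) (at level 40).
Local Notation "a '<=w' b" := (pw_le _ a b) (at level 70).

Section Prewedge.

Variable W : PW.
Hypothesis HW : is_prewedge W.

Lemma pw_add_comm (a b : W) : a +w b = b +w a.
Proof. apply (proj1 HW). Qed.

Lemma pw_add_assoc (a b c : W) : a +w (b +w c) = a +w b +w c.
Proof. apply (proj1 (proj2 HW)). Qed.

Lemma pw_add_0_r (a : W) : a +w pw_zero W = a.
Proof. apply (proj1 (proj2 (proj2 HW))). Qed.

Lemma pw_smul_smul l e (v : W) : 0 <= l -> 0 <= e -> l *w (e *w v) = (l * e) *w v.
Proof. apply (proj1 (proj2 (proj2 (proj2 HW)))). Qed.

Lemma pw_smul_0_l (v : W) : 0 *w v = pw_zero W.
Proof. apply (proj1 (proj2 (proj2 (proj2 (proj2 HW))))). Qed.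

Lemma pw_smul_1_l (v : W) : 1 *w v = v.
Proof. apply (proj1 (proj2 (proj2 (proj2 (proj2 (proj2 HW)))))). Qed.

Lemma pw_smul_plus_distr_r l e (v : W) :
  0 <= l -> 0 <= e -> (l + e) *w v = l *w v +w e *w v.
Proof. apply (proj1 (proj2 (proj2 (proj2 (proj2 (proj2 (proj2 HW))))))). Qed.

Lemma pw_smul_plus_distr_l l (v w : W) : 0 <= l -> l *w (v +w w) = l *w v +w l *w w.
Proof. apply (proj2 (proj2 (proj2 (proj2 (proj2 (proj2 (proj2 HW))))))). Qed.

Lemma pw_smul_inv_l l (v : W) : 0 < l -> / l *w (l *w v) = v.
Proof.
  intros Hl. rewrite pw_smul_smul by (pose proof (Rinv_0_lt_compat l Hl); lra).
  rewrite Rinv_l by lra. apply pw_smul_1_l.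
Qed.

Lemma pw_smul_2 (v : W) : 2 *w v = v +w v.
Proof.
  replace 2 with (1 + 1) by ring.
  rewrite pw_smul_plus_distr_r, pw_smul_1_l by lra. reflexivity.
Qed.

Lemma pw_smul_S n (v : W) : INR (S n) *w v = INR n *w v +w v.
Proof.
  rewrite S_INR, pw_smul_plus_distr_r, pw_smul_1_l; auto using pos_INR; lra.
Qed.

Lemma pw_le_refl (a : W) : a <=w a.
Proof. exists (pw_zero W). apply pw_add_0_r. Qed.

Lemma pw_le_trans (a b c : W) : a <=w b -> b <=w c -> a <=w c.
Proof. intros [z1 H1] [z2 H2]. exists (z1 +w z2). rewrite pw_add_assoc, H1. exact H2. Qed.

Lemma pw_le_add_r (a b : W) : a <=w a +w b.
Proof. exists b. reflexivity. Qed.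

Lemma pw_le_add_l (a b : W) : b <=w a +w b.
Proof. exists a. apply pw_add_comm. Qed.

Lemma pw_add_le_compat_r (a b c : W) : a <=w b -> a +w c <=w b +w c.
Proof.
  intros [z <-]. exists z. rewrite <- !pw_add_assoc, (pw_add_comm c z). reflexivity.
Qed.

Lemma pw_add_le_compat_l (a b c : W) : a <=w b -> c +w a <=w c +w b.
Proof. intros H. rewrite (pw_add_comm c a), (pw_add_comm c b). apply pw_add_le_compat_r, H. Qed.

Lemma pw_smul_le_compat l (a b : W) : 0 <= l -> a <=w b -> l *w a <=w l *w b.
Proof. intros Hl [z <-]. exists (l *w z). symmetry. apply pw_smul_plus_distr_l, Hl. Qed.

Lemma pw_smul_le_compat_scalar l m (v : W) : 0 <= l -> l <= m -> l *w v <=w m *w v.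
Proof.
  intros Hl Hlm. exists ((m - l) *w v).
  rewrite <- pw_smul_plus_distr_r by lra. f_equal. ring.
Qed.

Lemma pw_add_le_compat_mult (v a b : W) n :
  v +w a <=w v +w b -> v +w INR n *w a <=w v +w INR n *w b.
Proof.
  intros Hab. induction n as [|n IH].
  - rewrite !pw_smul_0_l. apply pw_le_refl.
  - rewrite !pw_smul_S, !pw_add_assoc.
    apply pw_le_trans with (v +w INR n *w b +w a); [now apply pw_add_le_compat_r|].
    rewrite <- !pw_add_assoc, (pw_add_comm (INR n *w b) a), (pw_add_comm (INR n *w b) b),
      !pw_add_assoc.
    now apply pw_add_le_compat_r.
Qed.

Lemma pw_add_cancel_le_frac (v a b : W) N :
  (0 < N)%nat -> v +w a <=w v +w b -> a <=w b +w / INR N *w v.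
Proof.
  intros HN Hab.
  assert (HNpos : 0 < INR N) by now apply lt_0_INR.
  assert (HNinv : 0 <= / INR N) by (left; now apply Rinv_0_lt_compat).
  pose proof (pw_smul_le_compat HNinv (pw_add_le_compat_mult N Hab)) as Hscaled.
  rewrite !pw_smul_plus_distr_l, !pw_smul_inv_l in Hscaled by assumption.
  rewrite pw_add_comm. eapply pw_le_trans; [apply pw_le_add_l | exact Hscaled].
Qed.

End Prewedge.

Section ConeWithJoins.

Variable J : PW.
Hypothesis HJ : is_cone_with_joins J.

Let HP : is_prewedge J := proj1 (proj1 (proj1 HJ)).
Let le_antisym : forall v w : J, v <=w w -> w <=w v -> v = w :=
  proj1 (proj2 (proj1 (proj1 HJ))).
Let sup_scaled := proj2 (proj2 (proj1 (proj1 HJ))).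
Let directed_sup := proj2 (proj1 HJ).
Let inf_exists := proj1 (proj2 HJ).
Let inf_translate := proj2 (proj2 HJ).

Lemma is_inf_unique (S : J -> Prop) x y : is_inf J S x -> is_inf J S y -> x = y.
Proof. intros [Hx Hgx] [Hy Hgy]. apply le_antisym; auto. Qed.

Lemma inf_is_inf (S : J -> Prop) : is_inf J S (inf J S).
Proof. unfold inf. apply epsilon_spec, inf_exists. Qed.

Lemma pw_add_inf_solutions (v w : J) : v <=w w -> v +w inf J (fun z => v +w z = w) = w.
Proof.
  intros [z0 Hz0].
  apply (is_inf_unique (S := translate J v (fun z => v +w z = w))).
  - apply inf_translate, inf_is_inf.
  - split.
    + intros s [a [Ha ->]]. rewrite Ha. apply (pw_le_refl HP).
    + intros y Hy. rewrite <- Hz0. apply Hy. now exists z0.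
Qed.

Definition absorbers (w : J) : J -> Prop := fun a => w +w a = w.

Lemma absorbers_directed (w : J) : directed J (absorbers w).
Proof.
  split.
  - exists (pw_zero J). apply (pw_add_0_r HP).
  - intros a b Ha Hb. exists (a +w b). unfold absorbers in *.
    split; [now rewrite (pw_add_assoc HP), Ha, Hb |].
    split; [apply pw_le_add_r | apply (pw_le_add_l HP)].
Qed.

(* Absorbers are closed under doubling, so their supremum t satisfies t <= t/2. *)
Lemma sup_absorbers_idem (w t : J) : is_sup J (absorbers w) t -> t +w t = t.
Proof.
  intros [Hub Hleast].
  assert (Hhalf : t <=w / 2 *w t).
  { apply Hleast. intros a Ha.
    rewrite <- (pw_smul_inv_l HP a Rlt_0_2).
    apply (pw_smul_le_compat HP); [lra |]. apply Hub.
    unfold absorbers in *. now rewrite (pw_smul_2 HP), (pw_add_assoc HP), Ha, Ha. }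
  apply le_antisym; [| apply pw_le_add_r].
  rewrite <- (pw_smul_2 HP).
  rewrite <- (pw_smul_inv_l HP t (Rinv_0_lt_compat 2 Rlt_0_2)) at 2.
  rewrite Rinv_inv. apply (pw_smul_le_compat HP); [lra | exact Hhalf].
Qed.

Lemma greatest_absorber (w : J) :
  exists t, absorbers w t /\ forall a, absorbers w a -> a <=w t.
Proof.
  destruct (directed_sup (absorbers_directed w)) as [t Ht].
  assert (Htw : t <=w w).
  { apply (proj2 Ht). intros a Ha. exists w. now rewrite (pw_add_comm HP). }
  destruct Htw as [c Hc].
  exists t. split; [|apply (proj1 Ht)].
  unfold absorbers. rewrite <- Hc at 1.
  now rewrite <- (pw_add_assoc HP), (pw_add_comm HP c t), (pw_add_assoc HP),
    (sup_absorbers_idem Ht).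
Qed.

(* The maximum is mu + t with mu := inf {z | v + z = w} and t the greatest
   absorber of w: any solution z is mu + a with w + a = w. *)
Lemma pw_sub_max_exists (v w : J) : v <=w w -> exists p, is_max J (fun z => v +w z = w) p.
Proof.
  intros Hvw.
  pose proof (pw_add_inf_solutions Hvw) as Hmu.
  set (mu := inf J (fun z => v +w z = w)) in *.
  destruct (greatest_absorber w) as [t [Ht Htmax]].
  exists (mu +w t). split.
  - now rewrite (pw_add_assoc HP), Hmu.
  - intros z Hz. destruct (proj1 (inf_is_inf (fun z => v +w z = w)) z Hz) as [a Ha].
    fold mu in Ha. rewrite <- Ha. apply (pw_add_le_compat_l HP), Htmax.
    unfold absorbers. rewrite <- Hmu at 1. now rewrite <- (pw_add_assoc HP), Ha.
Qed.

Lemma pw_sub_spec (v w : J) : v <=w w ->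
  v +w pw_sub J w v = w /\ forall z, v +w z = w -> z <=w pw_sub J w v.
Proof.
  intros Hvw.
  destruct (epsilon_spec (inhabits (pw_zero J)) _ (pw_sub_max_exists Hvw)) as [Heq Hmax].
  split; [exact Heq | exact Hmax].
Qed.

Definition fractions (v : J) : J -> Prop :=
  fun u => exists N : nat, (0 < N)%nat /\ u = / INR N *w v.

(* With h := inf (fractions v): ε(v + h) <= ε(1 + 1/N) v <= v once ε(1 + 1/N) <= 1,
   and v + h = sup_{ε<1} ε(v + h). *)
Lemma pw_add_inf_fractions (v : J) : v +w inf J (fractions v) = v.
Proof.
  destruct (inf_is_inf (fractions v)) as [Hlow _].
  apply le_antisym; [| apply pw_le_add_r].
  apply (proj2 (sup_scaled (v +w inf J (fractions v)))).
  intros u [e [[He0 He1] ->]].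
  destruct (archimed_cor1 (1 - e)) as [N [HN HN0]]; [lra|].
  assert (HNinv : 0 < / INR N) by now apply Rinv_0_lt_compat, lt_0_INR.
  apply (pw_le_trans HP) with (e *w ((1 + / INR N) *w v)).
  - apply (pw_smul_le_compat HP); [exact He0 |].
    rewrite (pw_smul_plus_distr_r HP), (pw_smul_1_l HP) by lra.
    apply (pw_add_le_compat_l HP), Hlow. now exists N.
  - rewrite (pw_smul_smul HP) by lra.
    rewrite <- (pw_smul_1_l HP v) at 2.
    apply (pw_smul_le_compat_scalar HP); nra.
Qed.

Lemma pw_add_cancel_le (v a b : J) :
  v +w a <=w v +w b -> a <=w b +w inf J (fractions v).
Proof.
  intros Hab. apply (proj2 (inf_translate b (inf_is_inf (fractions v)))).
  intros s [u [[N [HN ->]] ->]]. now apply pw_add_cancel_le_frac with (v := v).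
Qed.

Lemma pw_le_add_sub (v w vt wt : J) :
  v <=w w -> v +w vt <=w w +w wt -> vt <=w wt +w pw_sub J w v.
Proof.
  intros Hvw Hle. destruct (pw_sub_spec Hvw) as [Hp Hmax].
  set (p := pw_sub J w v) in *.
  set (h := inf J (fractions v)).
  assert (Hcancel : vt <=w wt +w p +w h).
  { apply pw_add_cancel_le.
    now rewrite (pw_add_comm HP wt p), (pw_add_assoc HP), Hp. }
  assert (Hph : p +w h <=w p).
  { apply Hmax. unfold h.
    rewrite (pw_add_assoc HP), (pw_add_comm HP v p), <- (pw_add_assoc HP),
      pw_add_inf_fractions.
    now rewrite (pw_add_comm HP). }
  apply (pw_le_trans HP) with (1 := Hcancel).
  rewrite <- (pw_add_assoc HP). exact (pw_add_le_compat_l HP wt Hph).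
Qed.

End ConeWithJoins.

Theorem mainTheorem12 (J : PW) (HJ : is_cone_with_joins J)
  (A At : (J * J)%type -> Prop)
  (HA : forall v w : J, A (v, w) -> pw_le J v w)
  (HAt : forall v w vt wt : J, A (v, w) -> At (vt, wt) ->
           pw_le J (pw_add J v vt) (pw_add J w wt)) :
  let x := inf J (fun z => exists v w : J, A (v, w) /\ z = pw_sub J w v) in
  (forall v w : J, A (v, w) -> pw_le J (pw_add J v x) w) /\
  (forall vt wt : J, At (vt, wt) -> pw_le J vt (pw_add J wt x)).
Proof.
  intros x.
  pose proof (inf_is_inf HJ (fun z => exists v w : J, A (v, w) /\ z = pw_sub J w v)) as Hx.
  fold x in Hx.
  pose proof (proj1 (proj1 (proj1 HJ))) as HP.
  split.
  - intros v w Hvw. destruct (pw_sub_spec HJ (HA v w Hvw)) as [Hsub _].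
    rewrite <- Hsub at 1. apply (pw_add_le_compat_l HP), (proj1 Hx). now exists v, w.
  - intros vt wt Hat. apply (proj2 (proj2 (proj2 HJ) wt _ _ Hx)).
    intros s [a [[v [w [Hvw ->]]] ->]].
    exact (pw_le_add_sub HJ (HA v w Hvw) (HAt v w vt wt Hvw Hat)).
Qed.
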